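(* Let $P$ be the set of $n\geq 3$ points equally spaced on the unit circle. Every geometric spanner on $P$ with dilation less than $2$ contains every edge of the convex hull of $P$ (i.e. every edge between two points consecutive on the circle).
   Context: A geometric spanner on $P$ is a graph with vertex set $P$ whose edges are weighted by the Euclidean distance between their endpoints. Its dilation is $\max\{ d_G(p,p')/|pp'| : p\neq p'\in P\}$, where $d_G$ is the shortest-path distance and $|pp'|$ the Euclidean distance. *)

From HB Require Import structures.
From mathcomp Require Import all_boot all_order all_algebra.
From mathcomp Require Import all_classical all_reals all_analysis.
Set Implicit Arguments. Unset Strict Implicit. Unset Printing Implicit Defensive.
Import Order.TTheory GRing.Theory Num.Theory.
Local Open Scope classical_set_scope.
Local Open Scope ring_scope.

Definition edist (R : realType) (a b : R * R) : R :=
  Num.sqrt ((a.1 - b.1) ^+ 2 + (a.2 - b.2) ^+ 2).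

Definition circ_pt (R : realType) (n : nat) (k : 'I_n) : R * R :=
  (cos (2 * pi * k%:R / n%:R), sin (2 * pi * k%:R / n%:R)).

Definition walk_weight (R : realType) (n : nat) (pt : 'I_n -> R * R)
    (p : 'I_n) (s : seq 'I_n) : R :=
  \sum_(xy <- zip (p :: s) s) edist (pt xy.1) (pt xy.2).

(* Shortest-path distance d_G(p,q) in the graph with edge relation e
   (infimum over walks; +oo if no walk exists). *)
Definition sp_dist (R : realType) (n : nat) (pt : 'I_n -> R * R)
    (e : rel 'I_n) (p q : 'I_n) : \bar R :=
  ereal_inf [set (walk_weight pt p s)%:E |
             s in [set s : seq 'I_n | path e p s && (last p s == q)]].

Definition dilation (R : realType) (n : nat) (pt : 'I_n -> R * R)
    (e : rel 'I_n) : \bar R :=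
  ereal_sup [set (sp_dist pt e pq.1 pq.2 * ((edist (pt pq.1) (pt pq.2))^-1)%:E)%E |
             pq in [set pq : 'I_n * 'I_n | pq.1 != pq.2]].

(* Consecutive points [i], [j] realise the minimum distance [d] between
   distinct points. If [ij] is not an edge, every walk from [i] to [j] passes
   through a third point [x], so by the triangle inequality it weighs at least
   [|ix| + |xj| >= 2d = 2|ij|], whence the dilation is at least 2. *)
From Pilot Require Import Defs.
From HB Require Import structures.
From mathcomp Require Import all_boot all_order all_algebra.
From mathcomp Require Import all_classical all_reals all_analysis.
From mathcomp Require Import complex ring lra zify.
Import Order.TTheory GRing.Theory Num.Theory.
Local Open Scope ring_scope.

Section EuclideanDistance.
Variable R : realType.
Implicit Types a b c : R * R.
Local Open Scope complex_scope.

Lemma edist_normc a b : (Defs.edist a b)%:C = `|(a.1 +i* a.2) - (b.1 +i* b.2)|.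
Proof. by rewrite normc_def. Qed.

Lemma edist_triangle a b c : Defs.edist a c <= Defs.edist a b + Defs.edist b c.
Proof.
rewrite -lecR rmorphD /= !edist_normc.
by rewrite -[X in `|X - _|](subrK (b.1 +i* b.2)) -addrA ler_normD.
Qed.

Lemma edistxx a : Defs.edist a a = 0.
Proof. by rewrite /Defs.edist !subrr expr0n /= addr0 sqrtr0. Qed.

Lemma edistC a b : Defs.edist a b = Defs.edist b a.
Proof. by rewrite /Defs.edist -sqrrN opprB -[X in _ + X]sqrrN opprB. Qed.

End EuclideanDistance.

Section Dilation.
Variables (R : realType) (n : nat) (pt : 'I_n -> R * R) (e : rel 'I_n).

Lemma walk_weight_cons p x s :
  walk_weight pt p (x :: s) = Defs.edist (pt p) (pt x) + walk_weight pt x s.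
Proof. by rewrite /walk_weight /= big_cons. Qed.

Lemma edist_last_le_walk_weight p s :
  Defs.edist (pt p) (pt (last p s)) <= walk_weight pt p s.
Proof.
elim: s p => [|x s IHs] p /=; first by rewrite edistxx /walk_weight big_nil.
rewrite walk_weight_cons (le_trans (edist_triangle _ _ (pt x) _)) // lerD2l.
exact: IHs.
Qed.

Section Detour.
Variables (d : R) (i j : 'I_n).
Hypothesis d_min : forall a b, a != b -> d <= Defs.edist (pt a) (pt b).
Hypotheses (neq_ij : i != j) (not_eij : ~~ e i j).

(* A walk from i to j avoiding the edge ij visits, after its initial stay at i,
   a point x distinct from both i and j. *)
Lemma walk_weight_ge_detour s :
  path e i s -> last i s = j -> 2 * d <= walk_weight pt i s.
Proof.
elim: s => [|x s IHs] /=; first by move=> _ eq_ij; move: neq_ij; rewrite eq_ij eqxx.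
case/andP=> eix path_xs last_xs; rewrite walk_weight_cons.
have [eq_ix | neq_ix] := eqVneq i x.
  by rewrite -eq_ix edistxx add0r; apply: IHs; rewrite eq_ix.
have neq_xj : x != j by apply: contraNneq not_eij => <-.
have := edist_last_le_walk_weight x s; rewrite last_xs.
have := d_min _ _ neq_ix.
have := d_min _ _ neq_xj.
lra.
Qed.

Lemma sp_dist_ge_detour : ((2 * d)%:E <= sp_dist pt e i j)%E.
Proof.
apply: le_ereal_inf_tmp => _ [s /andP[path_s /eqP last_s] <-].
by rewrite lee_fin walk_weight_ge_detour.
Qed.

End Detour.

Lemma dilation_ge2_closest_nonedge i j :
  i != j -> ~~ e i j -> 0 < Defs.edist (pt i) (pt j) ->
  (forall a b, a != b -> Defs.edist (pt i) (pt j) <= Defs.edist (pt a) (pt b)) ->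
  (2%:E <= dilation pt e)%E.
Proof.
move=> neq_ij not_eij dij_gt0 closest_ij.
have ratio_le : (sp_dist pt e i j * ((Defs.edist (pt i) (pt j))^-1)%:E <= dilation pt e)%E.
  by apply: ereal_sup_ubound; exists (i, j).
apply: le_trans ratio_le.
rewrite -[2](mulfK (lt0r_neq0 dij_gt0)) EFinM.
apply: lee_wpmul2r; first by rewrite lee_fin invr_ge0 ltW.
exact: sp_dist_ge_detour.
Qed.

End Dilation.

(* [+ n] keeps the subtraction from truncating when [a < b]. *)
Definition circ_offset (n a b : nat) : nat := ((a + n - b) %% n)%N.

Lemma circ_offset_gt0 (n a b : nat) : (a < n)%N -> (b < n)%N -> a != b ->
  (0 < circ_offset n a b)%N.
Proof.
rewrite /circ_offset => lt_an lt_bn neq_ab; have [le_ba | lt_ab] := leqP b a.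
  by rewrite (_ : a + n - b = a - b + n)%N ?modnDr ?modn_small; lia.
by rewrite modn_small; lia.
Qed.

Lemma circ_offset_succ (n i : nat) : (1 < n)%N -> (i < n)%N ->
  circ_offset n (i.+1 %% n) i = 1%N.
Proof.
rewrite /circ_offset => n_gt1 lt_in; have [lt_i1n | le_n_i1] := ltnP i.+1 n.
  rewrite (modn_small lt_i1n) (_ : i.+1 + n - i = 1 + n)%N; last by lia.
  by rewrite modnDr modn_small.
have def_n : n = i.+1 by lia.
by rewrite {1}def_n modnn (_ : 0 + n - i = 1)%N ?modn_small //; lia.
Qed.

Section UnitCircle.
Variable R : realType.

Definition circ_angle (n k : nat) : R := 2 * pi * k%:R / n%:R.

Lemma edist_cos_sin (x y : R) :
  Defs.edist (cos x, sin x) (cos y, sin y) = Num.sqrt (2 - 2 * cos (x - y)).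
Proof.
rewrite /Defs.edist /= cosB; congr Num.sqrt.
have := cos2Dsin2 x; have := cos2Dsin2 y.
lra.
Qed.

Lemma ler_cos : {in `[0, pi] &, {mono @cos R : x y /~ x <= y}}.
Proof. by apply: le_nmono_in => x y x0pi y0pi lt_xy; rewrite ltr_cos. Qed.

Lemma circ_angle_in_0pi (n m : nat) : (m.*2 <= n)%N -> circ_angle n m \in `[0, pi].
Proof.
move=> le_2m_n; have pi_gt0 := pi_gt0 R.
have [->|n_gt0] := posnP n; first by rewrite /circ_angle invr0 mulr0 in_itv /= lexx ltW.
rewrite /circ_angle in_itv /= divr_ge0 ?mulr_ge0 ?ler0n ?(ltW pi_gt0) //=.
rewrite ler_pdivrMr ?ltr0n //.
have : (m%:R * 2 <= n%:R :> R) by rewrite -natrM ler_nat muln2.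
nra.
Qed.

Lemma cos_circ_angle_le (n m : nat) : (0 < m < n)%N ->
  cos (circ_angle n m) <= cos (circ_angle n 1).
Proof.
wlog le_2m_n : m / (m.*2 <= n)%N => [wlog_m /andP[m_gt0 lt_mn]|].
  have [|lt_n_2m] := leqP m.*2 n; first by move=> ?; apply: wlog_m; lia.
  have -> : circ_angle n m = pi *+ 2 - circ_angle n (n - m).
    rewrite /circ_angle natrB ?(ltnW lt_mn) //; field.
    by rewrite pnatr_eq0 -lt0n (leq_ltn_trans _ lt_mn).
  by rewrite addrC cosD2pi cosN wlog_m; lia.
move=> /andP[m_gt0 _].
rewrite ler_cos ?circ_angle_in_0pi //; last by lia.
rewrite /circ_angle ler_pM2r ?invr_gt0 ?ltr0n; last by lia.
by rewrite ler_pM2l ?mulr_gt0 ?pi_gt0 // ler_nat.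
Qed.

Lemma cos_circ_angleB (n a b : nat) : (0 < n)%N -> (b <= a + n)%N ->
  cos (circ_angle n a - circ_angle n b) = cos (circ_angle n (circ_offset n a b)).
Proof.
move=> n_gt0 le_b_an; have nR_neq0 : n%:R != 0 :> R by rewrite pnatr_eq0 -lt0n.
have add_2pi : circ_angle n a - circ_angle n b + pi *+ 2 = circ_angle n (a + n - b).
  by rewrite /circ_angle natrB // natrD -[pi *+ 2]mulr_natr; field.
have wind : circ_angle n (a + n - b)
            = circ_angle n ((a + n - b) %% n) + pi *+ 2 *+ ((a + n - b) %/ n).
  rewrite {1}(divn_eq (a + n - b) n) /circ_angle natrD natrM.
  by rewrite -[pi *+ 2 *+ _]mulr_natr -[pi *+ 2]mulr_natr; field.
have := @cosD2pi R (circ_angle n a - circ_angle n b).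
by rewrite add_2pi wind (periodicn (@cosD2pi R)) => ->.
Qed.

Lemma edist_circ_pt (n : nat) (a b : 'I_n) :
  Defs.edist (circ_pt R a) (circ_pt R b)
  = Num.sqrt (2 - 2 * cos (circ_angle n (circ_offset n a b))).
Proof.
have lt_an := ltn_ord a; have lt_bn := ltn_ord b.
by rewrite /circ_pt edist_cos_sin cos_circ_angleB //; lia.
Qed.

Lemma edist_circ_pt_succ_le (n : nat) (i j a b : 'I_n) :
  (j : nat) = (i.+1 %% n)%N -> a != b ->
  Defs.edist (circ_pt R i) (circ_pt R j) <= Defs.edist (circ_pt R a) (circ_pt R b).
Proof.
rewrite -val_eqE /= => def_j neq_ab.
have lt_an := ltn_ord a; have lt_bn := ltn_ord b.
rewrite edistC !edist_circ_pt def_j circ_offset_succ //; last by lia.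
rewrite ler_sqrt ?subr_ge0 ?ler_piMr ?cos_le1 // lerD2l lerN2 ler_pM2l //.
by rewrite cos_circ_angle_le // circ_offset_gt0 // ltn_pmod //; lia.
Qed.

Lemma edist_circ_pt_succ_gt0 (n : nat) (i j : 'I_n) :
  (1 < n)%N -> (j : nat) = (i.+1 %% n)%N -> 0 < Defs.edist (circ_pt R i) (circ_pt R j).
Proof.
move=> n_gt1 def_j; have pi_gt0 := pi_gt0 R.
rewrite edistC edist_circ_pt def_j circ_offset_succ // sqrtr_gt0 subr_gt0.
rewrite gtr_pMr // -cos0 ltr_cos ?circ_angle_in_0pi ?in_itv /= ?lexx ?ltW //.
by rewrite /circ_angle divr_gt0 ?mulr_gt0 ?ltr0n //; lia.
Qed.

End UnitCircle.

Theorem lemma26 (R : realType) (n : nat) (e : rel 'I_n) :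
  (3 <= n)%N ->
  symmetric e ->
  (dilation (@circ_pt R n) e < 2%:E)%E ->
  forall (i j : 'I_n), (j : nat) = (i.+1 %% n)%N -> e i j.
Proof.
move=> n_ge3 _ dil_lt2 i j def_j; apply: contraTT dil_lt2 => not_eij.
have n_gt1 : (1 < n)%N by apply: ltnW.
rewrite -leNgt; apply: (@dilation_ge2_closest_nonedge R n (@circ_pt R n) e i j _ not_eij).
- apply/eqP => eq_ij; have := @circ_offset_succ n i n_gt1 (ltn_ord i).
  by rewrite -def_j -eq_ij /circ_offset addKn modnn.
- exact: edist_circ_pt_succ_gt0 def_j.
- by move=> a b; apply: edist_circ_pt_succ_le.
Qed.
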